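(* Let $X$ be a real Banach space and let $\mathcal{G}^0\subset\mathcal{G}_X$ be a subgroup such that $X$ is convex-transitive with respect to $\mathcal{G}^0$, i.e. $\overline{\mathrm{conv}}(\{T(x): T\in\mathcal{G}^0\})=B_X$ for every $x\in S_X$. Let $C\subset S_X$ be norm-dense in $S_X$, and let $A\subset X$ be a closed subspace whose density character $\kappa=\mathrm{dens}(A)$ is infinite. Then there is a closed subspace $Y\subset X$ such that: (1) $A\subset Y$; (2) $\mathrm{dens}(Y)=\kappa$; (3) $Y$ is convex-transitive with respect to the subgroup $\mathcal{G}^0_Y=\{T|_Y : T\in\mathcal{G}^0,\ T(Y)=Y\}$ of the isometry group of $Y$; (4) $C\cap S_Y$ is norm-dense in $S_Y$.
   Context: $\mathcal{G}_X$ denotes the group of rotations of $X$, i.e. surjective linear isometries $X\to X$. The density character $\mathrm{dens}(T)$ of a topological space is the least cardinality of a dense subset. *)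

From Stdlib Require Import Reals List.
Open Scope R_scope.

Record Banach := {
  car :> Type;
  vadd : car -> car -> car;
  vzero : car;
  vopp : car -> car;
  vscal : R -> car -> car;
  vnorm : car -> R;
  vaddA : forall x y z, vadd x (vadd y z) = vadd (vadd x y) z;
  vaddC : forall x y, vadd x y = vadd y x;
  vadd0 : forall x, vadd x vzero = x;
  vaddN : forall x, vadd x (vopp x) = vzero;
  vscal1 : forall x, vscal 1 x = x;
  vscalA : forall a b x, vscal a (vscal b x) = vscal (a * b) x;
  vscalDr : forall a x y, vscal a (vadd x y) = vadd (vscal a x) (vscal a y);
  vscalDl : forall a b x, vscal (a + b) x = vadd (vscal a x) (vscal b x);
  vnorm_ge0 : forall x, 0 <= vnorm x;
  vnorm_eq0 : forall x, vnorm x = 0 -> x = vzero;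
  vnorm_scal : forall a x, vnorm (vscal a x) = Rabs a * vnorm x;
  vnorm_tri : forall x y, vnorm (vadd x y) <= vnorm x + vnorm y;
  vcomplete : forall u : nat -> car,
    (forall eps, 0 < eps -> exists N, forall m n, (N <= m)%nat -> (N <= n)%nat ->
        vnorm (vadd (u m) (vopp (u n))) < eps) ->
    exists l, forall eps, 0 < eps -> exists N, forall n, (N <= n)%nat ->
        vnorm (vadd (u n) (vopp l)) < eps
}.

Arguments vadd {_}. Arguments vzero {_}. Arguments vopp {_}.
Arguments vscal {_}. Arguments vnorm {_}.

Section Defs.
Variable X : Banach.

Definition dist (x y : X) : R := vnorm (vadd x (vopp y)).

Definition sphere (x : X) : Prop := vnorm x = 1.
Definition ball1 (x : X) : Prop := vnorm x <= 1.

Definition closure (S : X -> Prop) (x : X) : Prop :=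
  forall eps, 0 < eps -> exists y, S y /\ dist x y < eps.

(* D is norm-dense in S (D need not be contained in S) *)
Definition dense_in (D S : X -> Prop) : Prop :=
  forall x, S x -> forall eps, 0 < eps -> exists y, D y /\ dist x y < eps.

Fixpoint comb (l : list (R * X)) : X :=
  match l with
  | nil => vzero
  | (a, x) :: l' => vadd (vscal a x) (comb l')
  end.

Definition conv (S : X -> Prop) (x : X) : Prop :=
  exists l : list (R * X),
    l <> nil /\
    Forall (fun p => 0 <= fst p /\ S (snd p)) l /\
    fold_right Rplus 0 (map fst l) = 1 /\
    comb l = x.

Definition closed_subspace (Y : X -> Prop) : Prop :=
  Y vzero /\
  (forall x y, Y x -> Y y -> Y (vadd x y)) /\
  (forall a x, Y x -> Y (vscal a x)) /\
  (forall x, closure Y x -> Y x).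

Definition linear_map (T : X -> X) : Prop :=
  (forall x y, T (vadd x y) = vadd (T x) (T y)) /\
  (forall a x, T (vscal a x) = vscal a (T x)).

Definition rotation (T : X -> X) : Prop :=
  linear_map T /\ (forall x, vnorm (T x) = vnorm x) /\
  (forall y, exists x, T x = y).

Definition rot_subgroup (G : (X -> X) -> Prop) : Prop :=
  (forall T, G T -> rotation T) /\
  G (fun x => x) /\
  (forall S T, G S -> G T -> G (fun x => S (T x))) /\
  (forall T, G T -> exists S, G S /\ (forall x, S (T x) = x) /\ (forall x, T (S x) = x)).

Definition orbit (G : (X -> X) -> Prop) (x : X) (y : X) : Prop :=
  exists T, G T /\ T x = y.

Definition convex_transitive (G : (X -> X) -> Prop) : Prop :=
  forall x, sphere x -> forall z, closure (conv (orbit G x)) z <-> ball1 z.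

Definition maps_onto (T : X -> X) (Y : X -> Prop) : Prop :=
  (forall y, Y y -> Y (T y)) /\ (forall y, Y y -> exists x, Y x /\ T x = y).

(* G^0_Y as maps acting on Y (restrictions of T in G with T(Y)=Y) *)
Definition restr_group (G : (X -> X) -> Prop) (Y : X -> Prop) (T : X -> X) : Prop :=
  G T /\ maps_onto T Y.

Definition convex_transitive_sub (G : (X -> X) -> Prop) (Y : X -> Prop) : Prop :=
  forall y, Y y -> sphere y ->
    forall z, (Y z /\ closure (conv (orbit (restr_group G Y) y)) z) <-> (Y z /\ ball1 z).

Definition card_le (P Q : X -> Prop) : Prop :=
  exists f : X -> X, (forall x, P x -> Q (f x)) /\
    (forall x y, P x -> P y -> f x = f y -> x = y).

Definition finite_set (P : X -> Prop) : Prop :=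
  exists l : list X, forall x, P x -> In x l.

(* dens(S) <= dens(T), where dens = least cardinality of a dense subset:
   for every dense subset D of T there is a dense subset E of S with |E| <= |D|. *)
Definition dens_le (S T : X -> Prop) : Prop :=
  forall D, (forall x, D x -> T x) -> dense_in D T ->
    exists E, (forall x, E x -> S x) /\ dense_in E S /\ card_le E D.

Definition dens_eq (S T : X -> Prop) : Prop := dens_le S T /\ dens_le T S.

Definition dens_infinite (S : X -> Prop) : Prop :=
  forall D, (forall x, D x -> S x) -> dense_in D S -> ~ finite_set D.

End Defs.

From Pilot Require Import Defs.
From Stdlib Require Import Reals List Arith Lra Lia Classical ClassicalEpsilon
  FunctionalExtensionality PropExtensionality Cantor.

(* Take a dense subset S0 of A of cardinality dens A (a union of maximal
   1/(k+1)-separated subsets of A).  Close S0 under countably many operations: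
   sums and rational multiples; the choice of a point of C near p/|p|; and, for
   all p, r and k, the rotations T_i (and their inverses) of a convex
   combination sum a_i T_i from G0 chosen, by convex transitivity of X, so that
   sum a_i T_i (p/|p|) lies within 1/(k+1) of r retracted to the unit ball.  The
   closure Y of the generated set W is a closed subspace; the chosen rotations
   map Y onto Y, which makes Y convex-transitive, and the chosen points of C are
   dense in S_Y.  Hessenberg's theorem |P x P| = |P| gives |W| = |S0|, whence
   dens Y = dens A. *)

Lemma partial_choice {A B : Type} (b0 : B) (P : A -> Prop) (R : A -> B -> Prop) :
  (forall x, P x -> exists y, R x y) -> exists f : A -> B, forall x, P x -> R x (f x).
Proof.
  intro H; exists (fun x => epsilon (inhabits b0) (R x)).
  intros x Hx; apply epsilon_spec, H, Hx.
Qed.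

Lemma epsilon_cond {A : Type} (i : inhabited A) (H : Prop) (P : A -> Prop) :
  (H -> exists x, P x) -> H -> P (epsilon i (fun x => H -> P x)).
Proof.
  intros Hex h; apply (epsilon_spec i (fun x => H -> P x)); [|exact h].
  destruct (Hex h) as [x Hx]; exists x; auto.
Qed.

Section Zorn.
Variable U : Type.

Definition incl_s (A B : U -> Prop) : Prop := forall x, A x -> B x.
Definition bigU (Ch : (U -> Prop) -> Prop) : U -> Prop :=
  fun x => exists S, Ch S /\ S x.

Lemma set_ext (A B : U -> Prop) : incl_s A B -> incl_s B A -> A = B.
Proof.
  intros H1 H2; apply functional_extensionality; intro x;
  apply propositional_extensionality; split; auto.
Qed.

(* The Bourbaki--Witt tower: the smallest family containing S0 and closed
   under an inflationary successor [nxt] and under unions of nonempty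
   subfamilies.  It is a chain (tower_chain). *)
Section Tower.
Variables (S0 : U -> Prop) (nxt : (U -> Prop) -> (U -> Prop)).
Hypothesis nxt_infl : forall S, incl_s S (nxt S).

Inductive tower : (U -> Prop) -> Prop :=
| tower_base : tower S0
| tower_next : forall S, tower S -> tower (nxt S)
| tower_union : forall Ch, (forall S, Ch S -> tower S) -> (exists S, Ch S) ->
    tower (bigU Ch).

Lemma tower_above_base c : tower c -> incl_s S0 c.
Proof.
  induction 1 as [|S _ IH|Ch _ IH [S HS]]; intros u h.
  - exact h.
  - apply nxt_infl, IH, h.
  - exists S; split; [exact HS|apply (IH S HS), h].
Qed.

Definition normal (c : U -> Prop) : Prop :=
  forall x, tower x -> incl_s x c -> x <> c -> incl_s (nxt x) c.

Lemma normal_dichotomy c : tower c -> normal c ->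
  forall x, tower x -> incl_s x c \/ incl_s (nxt c) x.
Proof.
  intros Hc Hn x Hx; induction Hx as [|S HS IH|Ch HCh IH _].
  - left; apply tower_above_base, Hc.
  - destruct IH as [H|H].
    + destruct (classic (S = c)) as [->|Hne].
      * right; intros u h; exact h.
      * left; apply Hn; auto.
    + right; intros u h; apply nxt_infl, H, h.
  - destruct (classic (exists S, Ch S /\ incl_s (nxt c) S)) as [[S [HS HS']]|Hno].
    + right; intros u h; exists S; split; auto.
    + left; intros u [S [HS Su]].
      destruct (IH S HS) as [H2|H2]; [auto|].
      exfalso; apply Hno; eauto.
Qed.

Lemma tower_normal c : tower c -> normal c.
Proof.
  induction 1 as [|S HS IH|Ch HCh IH Hne0]; intros x Hx Hi Hne.
  - exfalso; apply Hne, set_ext; [auto|apply tower_above_base, Hx].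
  - destruct (normal_dichotomy S HS IH x Hx) as [H|H].
    + destruct (classic (x = S)) as [->|Hne2].
      * intros u h; exact h.
      * intros u h; apply nxt_infl, (IH x Hx H Hne2), h.
    + exfalso; apply Hne, set_ext; auto.
  - destruct (classic (exists c, Ch c /\ ~ incl_s (nxt c) x)) as [[c [Hc Hc2]]|Hno].
    + destruct (normal_dichotomy c (HCh c Hc) (IH c Hc) x Hx) as [H2|H2];
        [|contradiction].
      destruct (classic (x = c)) as [->|Hne2].
      * assert (Hout : exists u, bigU Ch u /\ ~ c u).
        { apply NNPP; intro Hn'; apply Hne, set_ext; auto.
          intros u hu; apply NNPP; intro; apply Hn'; eauto. }
        destruct Hout as [u [[c' [Hc' c'u]] ncu]].
        destruct (normal_dichotomy c (HCh c Hc) (IH c Hc) c' (HCh c' Hc')) as [H3|H3].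
        -- exfalso; apply ncu, H3, c'u.
        -- intros v hv; exists c'; split; auto.
      * intros u hu; exists c; split; auto; apply (IH c Hc x Hx H2 Hne2), hu.
    + exfalso; apply Hne, set_ext; auto.
      intros u [c [Hc cu]].
      destruct (classic (incl_s (nxt c) x)) as [H3|H3].
      * apply H3, nxt_infl, cu.
      * exfalso; apply Hno; eauto.
Qed.

Lemma tower_chain x y : tower x -> tower y -> incl_s x y \/ incl_s y x.
Proof.
  intros Hx Hy.
  destruct (normal_dichotomy y Hy (tower_normal y Hy) x Hx) as [H|H]; auto.
  right; intros u h; apply H, nxt_infl, h.
Qed.

End Tower.

(* Zorn's lemma for sets ordered by inclusion: if no good set above S0 were
   maximal, a successor choosing strictly larger good sets would make the union
   of its tower good and yet strictly below its own successor. *)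
Lemma zorn_sets (Good : (U -> Prop) -> Prop) (S0 : U -> Prop) :
  Good S0 ->
  (forall Ch : (U -> Prop) -> Prop, (forall S, Ch S -> Good S) ->
     (forall S1 S2, Ch S1 -> Ch S2 -> incl_s S1 S2 \/ incl_s S2 S1) ->
     (exists S, Ch S) -> Good (bigU Ch)) ->
  exists M, Good M /\ incl_s S0 M /\ forall S, Good S -> incl_s M S -> incl_s S M.
Proof.
  intros HG0 Hch.
  apply NNPP; intro Hno.
  assert (Hstep : forall M, exists S, (Good M /\ incl_s S0 M) ->
                     Good S /\ incl_s M S /\ ~ incl_s S M).
  { intro M. destruct (classic (Good M /\ incl_s S0 M)) as [[H1 H2]|H].
    - apply NNPP; intro Hn; apply Hno; exists M; split; auto; split; auto.
      intros S HS HMS; apply NNPP; intro HSM; apply Hn; exists S; auto.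
    - exists M; intro; contradiction. }
  destruct (choice _ Hstep) as [ch Hch'].
  set (nxt := fun M u => M u \/ ch M u).
  assert (Hinf : forall S, incl_s S (nxt S)) by (intros S u h; left; auto).
  assert (Hgood : forall x, tower S0 nxt x -> Good x /\ incl_s S0 x).
  { induction 1 as [|S HS IH|Ch HCh IH [S HS]].
    - split; auto; intros u h; auto.
    - destruct (Hch' S IH) as [H1 [H2 H3]].
      replace (nxt S) with (ch S).
      + split; auto; intros u h; apply H2, (proj2 IH), h.
      + apply set_ext; intros u h; [right; auto| destruct h; auto].
    - split.
      + apply Hch; [intros; apply IH; auto| |eauto].
        intros; apply (tower_chain S0 nxt Hinf); auto.
      + intros u h; exists S; split; auto; apply (IH S HS), h. }
  set (Wt := bigU (tower S0 nxt)).
  assert (HW : tower S0 nxt Wt) by (apply tower_union; eauto; exists S0; constructor).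
  destruct (Hch' Wt (Hgood Wt HW)) as [_ [_ H3]].
  apply H3; intros u h. exists (nxt Wt); split; [constructor; auto|right; auto].
Qed.

(* S is pairwise good when [phi S p q] holds for all p, q in S.  For [phi]
   monotone in S this passes to unions of chains, so Zorn's lemma applies. *)
Definition pairwise_good (phi : (U -> Prop) -> U -> U -> Prop) (S : U -> Prop) :=
  forall p q, S p -> S q -> phi S p q.

Lemma zorn_pairwise (phi : (U -> Prop) -> U -> U -> Prop) (S0 : U -> Prop) :
  (forall S S' p q, incl_s S S' -> phi S p q -> phi S' p q) ->
  pairwise_good phi S0 ->
  exists M, pairwise_good phi M /\ incl_s S0 M /\
    forall S, pairwise_good phi S -> incl_s M S -> incl_s S M.
Proof.
  intros Hmono HS0; apply zorn_sets; [exact HS0|].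
  intros Ch HG Hc _ p q [S [HS Sp]] [S' [HS' Sq]].
  assert (Hup : forall T, Ch T -> incl_s T (bigU Ch)) by (intros T HT u h; exists T; auto).
  destruct (Hc S S' HS HS') as [I|I].
  - apply (Hmono S'); [apply Hup; auto| apply HG; auto].
  - apply (Hmono S); [apply Hup; auto| apply HG; auto].
Qed.

End Zorn.

Arguments incl_s {U}. Arguments bigU {U}.

Section Cardinals.
Variable U : Type.
Local Open Scope nat_scope.

Definition cle (P Q : U -> Prop) : Prop :=
  exists f : U -> U, (forall x, P x -> Q (f x)) /\
    (forall x y, P x -> P y -> f x = f y -> x = y).
Definition infin (P : U -> Prop) : Prop := forall l : list U, exists x, P x /\ ~ In x l.
Definition pairing (P : U -> Prop) (F : U -> U -> U) : Prop :=
  (forall x y, P x -> P y -> P (F x y)) /\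
  (forall x y x' y', P x -> P y -> P x' -> P y' -> F x y = F x' y' -> x = x' /\ y = y').

Lemma cle_trans (P Q R : U -> Prop) : cle P Q -> cle Q R -> cle P R.
Proof.
  intros [f [f1 f2]] [g [g1 g2]]; exists (fun x => g (f x)); split; auto.
Qed.

Lemma cle_sub (P Q : U -> Prop) : incl_s P Q -> cle P Q.
Proof. intros H; exists (fun x => x); split; auto. Qed.

(* Comparability of cardinals: of any two sets, one injects into the other
   (Zorn's lemma applied to partial injections, i.e. relations in P x Q). *)
Lemma comparability (t0 : U) (P Q : U -> Prop) : cle P Q \/ cle Q P.
Proof.
  set (phi := fun (_ : U * U -> Prop) (p q : U * U) =>
     P (fst p) /\ Q (snd p) /\ (fst p = fst q -> snd p = snd q) /\
     (snd p = snd q -> fst p = fst q)).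
  destruct (zorn_pairwise _ phi (fun _ => False)) as [M [HM [_ Hmax]]];
    [unfold phi; tauto| intros p q []|].
  assert (Hdom : forall a b, M (a,b) -> P a /\ Q b)
    by (intros a b H; destruct (HM _ _ H H) as [? [? _]]; auto).
  destruct (classic (forall a, P a -> exists b, M (a,b))) as [HA|HA].
  { left. destruct (partial_choice t0 P (fun a b => M (a,b)) HA) as [f Hf].
    exists f; split.
    - intros a Ha; apply (Hdom a), Hf, Ha.
    - intros a a' Ha Ha' He. apply (HM (a, f a) (a', f a')); auto. }
  destruct (classic (forall b, Q b -> exists a, M (a,b))) as [HB|HB].
  { right. destruct (partial_choice t0 Q (fun b a => M (a,b)) HB) as [g Hg].
    exists g; split.
    - intros b Hb; apply (Hdom _ b), Hg, Hb.
    - intros b b' Hb Hb' He. apply (HM (g b, b) (g b', b')); auto. }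
  exfalso.
  (* an unmatched a in P and an unmatched b in Q: adding (a,b) extends M *)
  apply not_all_ex_not in HA; destruct HA as [a HA].
  apply imply_to_and in HA; destruct HA as [Pa Na].
  apply not_all_ex_not in HB; destruct HB as [b HB].
  apply imply_to_and in HB; destruct HB as [Qb Nb].
  assert (Hin : incl_s (fun p => M p \/ p = (a,b)) M).
  { apply Hmax; [|intros p h; left; auto].
    intros [x y] [x' y'] [H|H] [H'|H']; unfold phi; simpl;
      try injection H as -> ->; try injection H' as -> ->.
    - apply (HM _ _ H H').
    - split; [apply (Hdom x y H)|split; [apply (Hdom x y H)|]].
      split; intros ->; exfalso; eauto.
    - split; [tauto|split; [tauto|]]. split; intros <-; exfalso; eauto.
    - tauto. }
  apply Na; exists b; apply Hin; right; auto.
Qed.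

Lemma infin_nat (P : U -> Prop) : infin P ->
  exists e : nat -> U, (forall n, P (e n)) /\ (forall n m, e n = e m -> n = m).
Proof.
  intros Hinf.
  destruct (choice _ Hinf) as [pick Hpick].
  set (h := fix h (n : nat) : list U := match n with 0 => nil | S n => pick (h n) :: h n end).
  exists (fun n => pick (h n)).
  assert (Hsub : forall n m, n < m -> In (pick (h n)) (h m)).
  { intros n m Hnm; induction m; [lia|].
    simpl. destruct (Nat.eq_dec n m) as [->|Hne]; [left; auto| right; apply IHm; lia]. }
  split; [intro; apply Hpick|].
  intros n m He.
  destruct (lt_eq_lt_dec n m) as [[H|H]|H]; auto.
  - exfalso; apply (proj2 (Hpick (h m))); rewrite <- He; apply Hsub; auto.
  - exfalso; apply (proj2 (Hpick (h n))); rewrite He; apply Hsub; auto.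
Qed.

(* Hessenberg's theorem |P x P| = |P| for infinite P, by Zorn's lemma on
   partial pairings, i.e. graphs of injective maps D x D -> D with D in P. *)
Section Hessenberg.
Variable P : U -> Prop.

Definition graph (D : U -> Prop) (m : U -> U -> U) (t : (U * U) * U) : Prop :=
  D (fst (fst t)) /\ D (snd (fst t)) /\ snd t = m (fst (fst t)) (snd (fst t)).

Definition hdom (M : (U * U) * U -> Prop) (x : U) : Prop := exists y z, M ((x,y),z).

(* The pairwise conditions saying that M is the graph of a pairing of its
   domain inside P: functional, injective, total, and closed. *)
Definition pgood (M : (U * U) * U -> Prop) (p q : (U * U) * U) : Prop :=
  match p, q with ((x,y),z), ((x',y'),z') =>
    P x /\ P y /\ P z /\ (x = x' -> y = y' -> z = z') /\ (z = z' -> x = x' /\ y = y') /\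
    (exists w, M ((x,x'),w)) /\ hdom M y /\ hdom M z
  end.

Lemma pgood_mono M M' p q : incl_s M M' -> pgood M p q -> pgood M' p q.
Proof.
  destruct p as [[x y] z], q as [[x' y'] z']; simpl.
  intros HM [? [? [? [? [? [[w Hw] [[u [v Hy]] [u' [v' Hz]]]]]]]]].
  do 5 (split; [assumption|]).
  split; [exists w| split; [exists u, v| exists u', v']]; apply HM; assumption.
Qed.

Lemma graph_good D m : incl_s D P -> pairing D m -> pairwise_good _ pgood (graph D m).
Proof.
  intros HDP [Hm1 Hm2] [[x y] z] [[x' y'] z'] [Dx [Dy Ez]] [Dx' [Dy' Ez']];
    simpl in *; subst z z'.
  split; [auto|]; split; [auto|]; split; [apply HDP, Hm1; auto|].
  split; [intros -> ->; reflexivity|].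
  split; [intro E; apply (Hm2 _ _ _ _ Dx Dy Dx' Dy' E)|].
  split; [exists (m x x')|split; [exists y, (m y y)| exists (m x y), (m (m x y) (m x y))]];
    repeat split; simpl; auto.
Qed.

Lemma good_graph M : pairwise_good _ pgood M ->
  exists m, incl_s (hdom M) P /\ pairing (hdom M) m /\ M = graph (hdom M) m.
Proof.
  intros HM.
  assert (Htot : forall x y, hdom M x -> hdom M y -> exists z, M ((x,y),z)).
  { intros x y [a [b Ha]] [c [d Hc]].
    destruct (HM _ _ Ha Hc) as [_ [_ [_ [_ [_ [H _]]]]]]; auto. }
  destruct (choice (fun xy z => hdom M (fst xy) -> hdom M (snd xy) -> M (xy, z)))
    as [m0 Hm0].
  { intros [x y]; destruct (classic (hdom M x /\ hdom M y)) as [[Hx Hy]|Hn].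
    - destruct (Htot x y Hx Hy) as [z Hz]; exists z; auto.
    - exists x; intros Hx Hy; tauto. }
  set (m := fun x y => m0 (x,y)).
  assert (Hm : forall x y, hdom M x -> hdom M y -> M ((x,y), m x y)) by
    (intros x y Hx Hy; apply (Hm0 (x,y)); auto).
  assert (HMm : forall x y z, M ((x,y),z) ->
            hdom M x /\ hdom M y /\ hdom M z /\ P x /\ z = m x y).
  { intros x y z H. assert (Hx : hdom M x) by (exists y, z; exact H).
    destruct (HM _ _ H H) as [Px [_ [_ [_ [_ [_ [Hy Hz]]]]]]].
    repeat split; auto.
    destruct (HM _ _ H (Hm x y Hx Hy)) as [_ [_ [_ [Hf _]]]]; auto. }
  exists m; split; [|split; [split|]].
  - intros x [y [z H]]; apply (HMm x y z H).
  - intros x y Hx Hy; apply (HMm _ _ _ (Hm x y Hx Hy)).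
  - intros x y x' y' Hx Hy Hx' Hy' E.
    destruct (HM _ _ (Hm x y Hx Hy) (Hm x' y' Hx' Hy')) as [_ [_ [_ [_ [Hi _]]]]]; auto.
  - apply set_ext.
    + intros [[x y] z] H; destruct (HMm x y z H) as [? [? [_ [_ ?]]]]; repeat split; auto.
    + intros [[x y] z] [Hx [Hy E]]; simpl in *; subst z; apply Hm; auto.
Qed.

Lemma absorb (D Q : U -> Prop) m a0 a1 :
  pairing D m -> D a0 -> D a1 -> a0 <> a1 -> cle Q D -> cle (fun x => D x \/ Q x) D.
Proof.
  intros [Hm1 Hm2] H0 H1 Hne [g [Hg1 Hg2]].
  exists (fun x => if excluded_middle_informative (D x) then m a0 x else m a1 (g x)).
  split.
  - intros x Hx; destruct (excluded_middle_informative (D x)); auto.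
    apply Hm1; [auto| apply Hg1; tauto].
  - intros x y Hx Hy.
    destruct (excluded_middle_informative (D x)) as [Dx|Dx];
    destruct (excluded_middle_informative (D y)) as [Dy|Dy]; intro E;
    (apply Hm2 in E; [destruct E as [E1 E2]|auto|..]);
    try (apply Hg1; tauto); try (apply Hg2; tauto); congruence.
Qed.

Lemma cle_image (D : U -> Prop) h :
  (forall x y, D x -> D y -> h x = h y -> x = y) ->
  cle (fun x => exists d, D d /\ x = h d) D.
Proof.
  intros Hh.
  destruct (choice (fun x d => (exists d, D d /\ x = h d) -> D d /\ x = h d)) as [g Hg].
  { intro x; destruct (classic (exists d, D d /\ x = h d)) as [[d Hd]|Hn];
      [exists d| exists x]; tauto. }
  exists g; split.
  - intros x Hx; apply (Hg x Hx).
  - intros x y Hx Hy E; rewrite (proj2 (Hg x Hx)), (proj2 (Hg y Hy)), E; auto.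
Qed.

(* If D injects into its complement in P, a pairing of D extends to a pairing
   of a strictly larger subset of P: D u h(D) is absorbed into D, and new
   pairs are sent into h(D) through h. *)
Lemma pairing_extend D m a0 a1 :
  incl_s D P -> pairing D m -> D a0 -> D a1 -> a0 <> a1 ->
  cle D (fun x => P x /\ ~ D x) ->
  exists D' m', incl_s D' P /\ pairing D' m' /\ incl_s D D' /\ ~ incl_s D' D /\
    forall x y, D x -> D y -> m' x y = m x y.
Proof.
  intros HDP Hm H0 H1 Hne [h [Hh1 Hh2]].
  set (D' := fun x => D x \/ exists d, D d /\ x = h d).
  destruct (absorb D _ m a0 a1 Hm H0 H1 Hne (cle_image D h Hh2)) as [c [Hc1 Hc2]].
  destruct Hm as [Hm1 Hm2].
  set (m' := fun x y => if excluded_middle_informative (D x /\ D y) then m x y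
                        else h (m (c x) (c y))).
  assert (HhD : forall d, D d -> ~ D (h d)) by (intros d Hd; apply Hh1, Hd).
  exists D', m'; split; [|split; [split|split; [|split]]].
  - intros x [Hx|[d [Hd ->]]]; [auto| apply Hh1, Hd].
  - intros x y Hx Hy; unfold m'; destruct (excluded_middle_informative (D x /\ D y)).
    + left; apply Hm1; tauto.
    + right; exists (m (c x) (c y)); split; auto.
  - intros x y x' y' Hx Hy Hx' Hy'; unfold m'.
    destruct (excluded_middle_informative (D x /\ D y)) as [Dxy|Dxy];
    destruct (excluded_middle_informative (D x' /\ D y')) as [Dxy'|Dxy']; intro E.
    + apply Hm2; tauto.
    + exfalso; apply (HhD (m (c x') (c y'))); [apply Hm1; auto| rewrite <- E; apply Hm1; tauto].
    + exfalso; apply (HhD (m (c x) (c y))); [apply Hm1; auto| rewrite E; apply Hm1; tauto].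
    + apply Hh2, Hm2 in E; auto; destruct E as [E1 E2].
      split; [apply Hc2| apply Hc2]; auto.
  - intros x Hx; left; exact Hx.
  - intro Hsub. apply (HhD a0 H0), Hsub. right; exists a0; auto.
  - intros x y Hx Hy; unfold m'; destruct (excluded_middle_informative (D x /\ D y)); tauto.
Qed.

Lemma range_pairing (e : nat -> U) : (forall n m, e n = e m -> n = m) ->
  exists m0, pairing (fun x => exists n, x = e n) m0.
Proof.
  intros einj.
  destruct (partial_choice 0 (fun x => exists n, x = e n) (fun x n => x = e n))
    as [einv Heinv]; [auto|].
  exists (fun x y => e (Cantor.to_nat (einv x, einv y))).
  split; [intros x y _ _; eexists; reflexivity|].
  intros x y x' y' Hx Hy Hx' Hy' E. apply einj, (f_equal Cantor.of_nat) in E.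
  rewrite !Cantor.cancel_of_to in E; injection E as E1 E2.
  rewrite (Heinv x Hx), (Heinv y Hy), (Heinv x' Hx'), (Heinv y' Hy'), E1, E2; auto.
Qed.

(* A maximal partial pairing (Zorn) with domain D: if D injected into P \ D it
   would extend, so P \ D injects into D, P is absorbed into D, and the pairing
   of D transports to P. *)
Theorem hessenberg : infin P -> exists F, pairing P F.
Proof.
  intros Hinf.
  destruct (infin_nat P Hinf) as [e [eP einj]].
  set (D0 := fun x => exists n, x = e n).
  destruct (range_pairing e einj) as [m0 Hm0].
  assert (HD0P : incl_s D0 P) by (intros x [n ->]; auto).
  destruct (zorn_pairwise _ pgood (graph D0 m0) pgood_mono (graph_good D0 m0 HD0P Hm0))
    as [M [HM [HM0 Hmax]]].
  destruct (good_graph M HM) as [m [HDP [Hm HMm]]].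
  set (D := hdom M).
  assert (He : forall n, D (e n)).
  { intro n; exists (e n), (m0 (e n) (e n)); apply HM0; repeat split; exists n; auto. }
  assert (He01 : e 0 <> e 1) by (intro E; apply einj in E; discriminate).
  destruct (comparability (e 0) D (fun x => P x /\ ~ D x)) as [Hext|Habs].
  - (* D injects into P \ D: then M would not be maximal *)
    exfalso.
    destruct (pairing_extend D m (e 0) (e 1) HDP Hm (He 0) (He 1) He01 Hext)
      as [D' [m' [HD'P [Hm' [HDD' [HD' Hagree]]]]]].
    assert (Hsub : incl_s (graph D' m') M).
    { apply Hmax; [apply graph_good; auto|].
      rewrite HMm; intros [[x y] z] [Hx [Hy Ez]]; simpl in *; subst z.
      repeat split; simpl; auto; symmetry; apply Hagree; auto. }
    apply HD'; intros x Hx.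
    exists x, (m' x x); apply Hsub; repeat split; auto.
  -
    destruct (absorb D _ m (e 0) (e 1) Hm (He 0) (He 1) He01 Habs) as [f [Hf1 Hf2]].
    assert (HPD : forall x, P x -> D (f x)) by (intros x Px; apply Hf1; tauto).
    destruct Hm as [Hm1 Hm2].
    exists (fun x y => m (f x) (f y)); split.
    + intros x y Px Py; apply HDP, Hm1; apply HPD; assumption.
    + intros x y x' y' Px Py Px' Py' E.
      apply Hm2 in E; try (apply HPD; assumption).
      destruct E; split; apply Hf2; tauto.
Qed.

End Hessenberg.

(* A countable union of sets each injecting into an infinite Q injects into Q:
   code x in P n by the pair (n, f_n x) through Hessenberg's pairing. *)
Lemma cle_countable_union (P : nat -> U -> Prop) (Q : U -> Prop) :
  infin Q -> (forall n, cle (P n) Q) -> cle (fun x => exists n, P n x) Q.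
Proof.
  intros HQ HP.
  destruct (hessenberg Q HQ) as [F [F1 F2]].
  destruct (infin_nat Q HQ) as [e [eQ einj]].
  destruct (choice _ HP) as [f Hf].
  destruct (partial_choice 0 (fun x => exists n, P n x) (fun x n => P n x))
    as [nx Hnx]; [auto|].
  exists (fun x => F (e (nx x)) (f (nx x) x)); split.
  - intros x Hx; apply F1; [auto| apply (proj1 (Hf (nx x))), Hnx, Hx].
  - intros x y Hx Hy E.
    apply F2 in E; try apply (proj1 (Hf _)); try apply Hnx; auto.
    destruct E as [E1 E2]; apply einj in E1; rewrite <- E1 in E2.
    apply (proj2 (Hf (nx x))); [apply Hnx, Hx| rewrite E1; apply Hnx, Hy| exact E2].
Qed.

Lemma cle_union (A B Q : U -> Prop) :
  infin Q -> cle A Q -> cle B Q -> cle (fun x => A x \/ B x) Q.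
Proof.
  intros HQ HA HB.
  apply cle_trans with (fun x => exists n, match n with 0 => A x | _ => B x end).
  - apply cle_sub; intros x [Hx|Hx]; [exists 0| exists 1]; exact Hx.
  - apply cle_countable_union; [exact HQ|]; intros [|n]; assumption.
Qed.

Lemma cle_ops (I : Type) (enc : I -> nat) (ops : I -> U -> U -> U -> U) (P Q : U -> Prop) :
  (forall i j, enc i = enc j -> i = j) -> infin Q -> cle P Q ->
  cle (fun x => exists i a b c, P a /\ P b /\ P c /\ x = ops i a b c) Q.
Proof.
  intros Henc HQ [f [Hf1 Hf2]].
  set (good := fun x (t : I * U * U * U) => let '(i, a, b, c) := t in
                 P a /\ P b /\ P c /\ x = ops i a b c).
  destruct (classic (exists x t, good x t)) as [[x0 [t0 _]]|Hno].
  2:{ exists (fun x => x); split; [intros x|intros x y]; intros [i [a [b [c H]]]];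
      exfalso; apply Hno; exists x, (i, a, b, c); exact H. }
  destruct (partial_choice t0 (fun x => exists i a b c, P a /\ P b /\ P c /\ x = ops i a b c)
              good) as [w Hw].
  { intros x [i [a [b [c H]]]]; exists (i, a, b, c); exact H. }
  destruct (hessenberg Q HQ) as [F [F1 F2]].
  destruct (infin_nat Q HQ) as [e [eQ einj]].
  exists (fun x => let '(i, a, b, c) := w x in F (e (enc i)) (F (f a) (F (f b) (f c)))).
  split.
  - intros x Hx; specialize (Hw x Hx); destruct (w x) as [[[i a] b] c].
    destruct Hw as [Ha [Hb [Hc _]]]; repeat (apply F1; auto).
  - intros x y Hx Hy E.
    assert (Wx := Hw x Hx); assert (Wy := Hw y Hy).
    destruct (w x) as [[[i a] b] c], (w y) as [[[i' a'] b'] c'].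
    destruct Wx as [Ha [Hb [Hc ->]]], Wy as [Ha' [Hb' [Hc' ->]]].
    apply F2 in E as [E1 E]; try (repeat apply F1; auto).
    apply F2 in E as [E2 E]; try (repeat apply F1; auto).
    apply F2 in E as [E3 E4]; auto.
    apply einj, Henc in E1; apply Hf2 in E2; apply Hf2 in E3; apply Hf2 in E4; auto.
    subst; reflexivity.
Qed.

End Cardinals.

Arguments cle {U}. Arguments infin {U}.

Section Generated.
Variables (U I : Type) (ops : I -> U -> U -> U -> U) (S0 : U -> Prop).

Fixpoint stage (n : nat) : U -> Prop :=
  match n with
  | 0 => S0
  | S n => fun x => stage n x \/
      exists i a b c, stage n a /\ stage n b /\ stage n c /\ x = ops i a b c
  end.

Definition generated (x : U) : Prop := exists n, stage n x.

Lemma stage_mono n m x : (n <= m)%nat -> stage n x -> stage m x.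
Proof. induction 1; [auto| intro; left; auto]. Qed.

Lemma generated_base x : S0 x -> generated x.
Proof. intro; exists 0%nat; auto. Qed.

Lemma generated_op i a b c :
  generated a -> generated b -> generated c -> generated (ops i a b c).
Proof.
  intros [n1 H1] [n2 H2] [n3 H3]; exists (S (n1 + n2 + n3)); right.
  exists i, a, b, c; repeat split;
    [apply (stage_mono n1)| apply (stage_mono n2)| apply (stage_mono n3)]; auto; lia.
Qed.

Lemma generated_card (enc : I -> nat) :
  (forall i j, enc i = enc j -> i = j) -> infin S0 -> cle generated S0.
Proof.
  intros Henc HS0; apply cle_countable_union; [exact HS0|].
  induction n as [|n IH]; [apply cle_sub; intros x h; exact h|].
  apply cle_union; [exact HS0| exact IH| apply (cle_ops U I enc); auto].
Qed.

End Generated.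

(* the metric of the space (not the real-line distance Rlimit.dist) *)
Local Notation dist := Defs.dist.

Lemma inv_succ_small (e : R) : 0 < e -> exists k : nat, / (INR k + 1) < e.
Proof.
  intro He. destruct (archimed_cor1 e He) as [N [HN HN0]]. exists N.
  assert (0 < INR N) by (apply lt_0_INR; auto).
  apply Rle_lt_trans with (/ INR N); auto. apply Rinv_le_contravar; lra.
Qed.

Lemma inv_succ_pos (k : nat) : 0 < / (INR k + 1).
Proof. apply Rinv_0_lt_compat; assert (0 <= INR k) by apply pos_INR; lra. Qed.

Lemma rational_approx (a d : R) : 0 < d -> exists i j k : nat,
  Rabs (a - (INR i - INR j) / (INR k + 1)) < d.
Proof.
  intro Hd. destruct (archimed_cor1 d Hd) as [N [HN HN0]].
  assert (HNr : 0 < INR N) by (apply lt_0_INR; auto).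
  set (z := up (a * INR N)).
  destruct (archimed (a * INR N)) as [H1 H2].
  assert (Ez : IZR z = INR (Z.to_nat z) - INR (Z.to_nat (- z))).
  { destruct z as [|p|p]; simpl; [ring| |]; rewrite INR_IPR; unfold IZR; ring. }
  exists (Z.to_nat z), (Z.to_nat (- z)), (pred N).
  rewrite <- Ez.
  replace (INR (pred N) + 1) with (INR N) by (rewrite <- S_INR; f_equal; lia).
  apply Rle_lt_trans with (/ INR N); auto.
  replace (a - IZR z / INR N) with (- ((IZR z - a * INR N) / INR N)) by (field; lra).
  rewrite Rabs_Ropp. unfold Rdiv. rewrite Rabs_mult, Rabs_inv, (Rabs_right (INR N)) by lra.
  rewrite Rabs_right by (unfold z; lra).
  rewrite <- (Rmult_1_l (/ INR N)) at 2.
  apply Rmult_le_compat_r; [left; apply Rinv_0_lt_compat; auto| unfold z; lra].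
Qed.

Section NormedSpace.
Variable X : Banach.

Lemma vadd0l (x : X) : vadd vzero x = x.
Proof. rewrite vaddC; apply vadd0. Qed.

Lemma vaddNl (x : X) : vadd (vopp x) x = vzero.
Proof. rewrite vaddC; apply vaddN. Qed.

Lemma vadd_cancel (a b c : X) : vadd a b = vadd a c -> b = c.
Proof.
  intro H. assert (H2 := f_equal (vadd (vopp a)) H).
  rewrite !vaddA, !vaddNl, !vadd0l in H2; auto.
Qed.

Lemma vscal0 (x : X) : vscal 0 x = vzero.
Proof.
  apply (vadd_cancel (vscal 0 x)). rewrite vadd0, <- vscalDl. f_equal; ring.
Qed.

Lemma vscal_m1 (x : X) : vscal (-1) x = vopp x.
Proof.
  apply (vadd_cancel x). rewrite vaddN. rewrite <- (vscal1 X x) at 1.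
  rewrite <- vscalDl. replace (1 + -1) with 0 by ring. apply vscal0.
Qed.

Lemma vscal_zero (a : R) : vscal a (@vzero X) = vzero.
Proof. rewrite <- (vscal0 vzero), vscalA, Rmult_0_r; reflexivity. Qed.

Lemma vopp_scal (a : R) (x : X) : vopp (vscal a x) = vscal (-a) x.
Proof. rewrite <- vscal_m1, vscalA; f_equal; ring. Qed.

Lemma vopp_add (x y : X) : vopp (vadd x y) = vadd (vopp x) (vopp y).
Proof. rewrite <- !vscal_m1, vscalDr; auto. Qed.

Lemma vopp_opp (x : X) : vopp (vopp x) = x.
Proof. rewrite <- !vscal_m1, vscalA. replace (-1 * -1) with 1 by ring. apply vscal1. Qed.

Lemma vnorm0 : vnorm (@vzero X) = 0.
Proof. rewrite <- (vscal0 vzero), vnorm_scal, Rabs_R0; ring. Qed.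

Lemma vnorm_opp (x : X) : vnorm (vopp x) = vnorm x.
Proof.
  rewrite <- vscal_m1, vnorm_scal. replace (Rabs (-1)) with 1; [ring|].
  rewrite Rabs_left; lra.
Qed.

Lemma dist_self (x : X) : dist X x x = 0.
Proof. unfold Defs.dist; rewrite vaddN; apply vnorm0. Qed.

Lemma dist_sym (x y : X) : dist X x y = dist X y x.
Proof.
  unfold Defs.dist. rewrite <- vnorm_opp, vopp_add, vopp_opp, vaddC; auto.
Qed.

Lemma dist_tri (x y z : X) : dist X x z <= dist X x y + dist X y z.
Proof.
  unfold Defs.dist. replace (vadd x (vopp z)) with (vadd (vadd x (vopp y)) (vadd y (vopp z))).
  - apply vnorm_tri.
  - rewrite <- !vaddA. f_equal. rewrite vaddA, vaddNl, vadd0l; auto.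
Qed.

Lemma dist_eq0 (x y : X) : dist X x y = 0 -> x = y.
Proof.
  unfold Defs.dist; intro H; apply vnorm_eq0 in H.
  assert (H2 := f_equal (fun z => vadd z y) H). simpl in H2.
  rewrite <- vaddA, vaddNl, vadd0, vadd0l in H2; auto.
Qed.

Lemma dist_0r (x : X) : dist X x vzero = vnorm x.
Proof. unfold Defs.dist. rewrite <- vscal_m1, vscal_zero, vadd0; auto. Qed.

Lemma dist_add (x y x' y' : X) :
  dist X (vadd x y) (vadd x' y') <= dist X x x' + dist X y y'.
Proof.
  unfold Defs.dist. rewrite vopp_add.
  replace (vadd (vadd x y) (vadd (vopp x') (vopp y')))
    with (vadd (vadd x (vopp x')) (vadd y (vopp y'))); [apply vnorm_tri|].
  rewrite <- !vaddA; f_equal. rewrite !vaddA; f_equal; apply vaddC.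
Qed.

Lemma dist_scal (a : R) (x y : X) : dist X (vscal a x) (vscal a y) = Rabs a * dist X x y.
Proof.
  unfold Defs.dist. rewrite <- vnorm_scal, vscalDr, <- !vscal_m1, !vscalA, Rmult_comm.
  reflexivity.
Qed.

Lemma dist_scal2 (a b : R) (x : X) : dist X (vscal a x) (vscal b x) = Rabs (a - b) * vnorm x.
Proof.
  unfold Defs.dist. rewrite vopp_scal, <- vscalDl, vnorm_scal; auto.
Qed.

Lemma norm_pos (p : X) : p <> vzero -> 0 < vnorm p.
Proof.
  intro H. destruct (vnorm_ge0 X p) as [H1|H1]; auto. exfalso; apply H, vnorm_eq0; auto.
Qed.

Lemma dist_scal_1 (a : R) (x : X) : dist X (vscal a x) x = Rabs (a - 1) * vnorm x.
Proof. rewrite <- (dist_scal2 a 1 x), vscal1; reflexivity. Qed.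

Lemma norm_dist (x y : X) : vnorm x <= vnorm y + dist X x y.
Proof. rewrite <- !dist_0r, Rplus_comm. apply dist_tri. Qed.

Lemma rot_dist (T : X -> X) x y : rotation X T -> dist X (T x) (T y) = dist X x y.
Proof.
  intros [[Hadd Hscal] [Hn _]]. unfold Defs.dist.
  rewrite <- vscal_m1, <- Hscal, <- Hadd, Hn, vscal_m1; auto.
Qed.

End NormedSpace.

Section ClosureFacts.
Variable X : Banach.

Lemma closure_incl (S : X -> Prop) x : S x -> closure X S x.
Proof. intros H e He; exists x; split; auto; rewrite dist_self; auto. Qed.

Lemma closure_closed (S : X -> Prop) x : closure X (closure X S) x -> closure X S x.
Proof.
  intros H e He. destruct (H (e/2)) as [y [Hy Hd]]; [lra|].
  destruct (Hy (e/2)) as [z [Hz Hd2]]; [lra|].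
  exists z; split; auto. assert (T := dist_tri X x y z); lra.
Qed.

Lemma closure_add (S : X -> Prop) :
  (forall a b, S a -> S b -> S (vadd a b)) ->
  forall x y, closure X S x -> closure X S y -> closure X S (vadd x y).
Proof.
  intros HS x y Hx Hy e He.
  destruct (Hx (e/2)) as [a [Ha Hda]]; [lra|]. destruct (Hy (e/2)) as [b [Hb Hdb]]; [lra|].
  exists (vadd a b); split; auto. assert (T := dist_add X x y a b); lra.
Qed.

Lemma closure_scal (S : X -> Prop) :
  (forall i j k a, S a -> S (vscal ((INR i - INR j) / (INR k + 1)) a)) ->
  forall r x, closure X S x -> closure X S (vscal r x).
Proof.
  intros HS r x Hx e He.
  assert (Hr0 : 0 <= Rabs r) by apply Rabs_pos.
  destruct (Hx (e / (4 * (Rabs r + 1)))) as [w [Hw Hdw]]; [apply Rdiv_lt_0_compat; lra|].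
  assert (Hw0 : 0 <= vnorm w) by apply vnorm_ge0.
  destruct (rational_approx r (e / (4 * (vnorm w + 1)))) as [i [j [k Hq]]];
    [apply Rdiv_lt_0_compat; lra|].
  set (q := (INR i - INR j) / (INR k + 1)) in *.
  exists (vscal q w); split; [apply HS, Hw|].
  assert (T := dist_tri X (vscal r x) (vscal r w) (vscal q w)).
  rewrite dist_scal, dist_scal2 in T.
  assert (E1 : Rabs r * dist X x w <= e / 4).
  { apply Rle_trans with (Rabs r * (e / (4 * (Rabs r + 1))));
      [apply Rmult_le_compat_l; lra|].
    unfold Rdiv; apply (Rmult_le_reg_r (4 * (Rabs r + 1))); [lra|].
    rewrite !Rmult_assoc, Rinv_l by lra. nra. }
  assert (E2 : Rabs (r - q) * vnorm w <= e / 4).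
  { apply Rle_trans with (e / (4 * (vnorm w + 1)) * vnorm w);
      [apply Rmult_le_compat_r; lra|].
    unfold Rdiv; apply (Rmult_le_reg_r (4 * (vnorm w + 1))); [lra|].
    replace (e * / (4 * (vnorm w + 1)) * vnorm w * (4 * (vnorm w + 1))) with
      (e * vnorm w * (/ (4 * (vnorm w + 1)) * (4 * (vnorm w + 1)))) by ring.
    rewrite Rinv_l by lra. nra. }
  lra.
Qed.

Lemma closure_subspace (S : X -> Prop) :
  S vzero -> (forall a b, S a -> S b -> S (vadd a b)) ->
  (forall i j k a, S a -> S (vscal ((INR i - INR j) / (INR k + 1)) a)) ->
  closed_subspace X (closure X S).
Proof.
  intros H0 Hadd Hscal; split; [|split; [|split]].
  - apply closure_incl, H0.
  - apply closure_add, Hadd.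
  - intros a x; apply closure_scal, Hscal.
  - apply closure_closed.
Qed.

Lemma comb_norm (l : list (R * X)) :
  Forall (fun q => 0 <= fst q /\ vnorm (snd q) <= 1) l ->
  vnorm (comb X l) <= fold_right Rplus 0 (map fst l).
Proof.
  induction l as [|[a x] l IH]; intro H; simpl.
  - rewrite vnorm0; lra.
  - inversion H; subst. simpl in *. destruct H2 as [Ha Hx].
    assert (T := vnorm_tri X (vscal a x) (comb X l)).
    rewrite vnorm_scal, Rabs_right in T by lra.
    assert (I := IH H3). nra.
Qed.

Lemma closed_conv_orbit_ball (G : (X -> X) -> Prop) y z :
  (forall T, G T -> rotation X T) -> sphere X y ->
  closure X (conv X (orbit X G y)) z -> ball1 X z.
Proof.
  intros Hrot Hy Hcl. unfold ball1. apply Rnot_lt_le; intro Hlt.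
  destruct (Hcl (vnorm z - 1)) as [v [[l [_ [HF [Hs Hc]]]] Hd]]; [lra|].
  assert (Hv : vnorm v <= 1).
  { rewrite <- Hc, <- Hs. apply comb_norm. rewrite Forall_forall in *.
    intros q Hq. destruct (HF q Hq) as [Ha [T [HT HTy]]]. split; auto.
    rewrite <- HTy. destruct (Hrot T HT) as [_ [-> _]]. unfold sphere in Hy; lra. }
  assert (N := norm_dist X z v). lra.
Qed.

End ClosureFacts.

(* A dense subset S0 of A that injects into every dense subset of A, so that
   |S0| = dens(A): the union over k of maximal 1/(k+1)-separated subsets of A. *)
Section Nets.
Variables (X : Banach) (A : X -> Prop).

Definition separated (k : nat) (N : X -> Prop) : Prop :=
  incl_s N A /\ forall x y, N x -> N y -> x <> y -> / (INR k + 1) <= dist X x y.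

Lemma maximal_separated (k : nat) : exists N, separated k N /\
  forall a, A a -> exists x, N x /\ dist X a x < / (INR k + 1).
Proof.
  set (phi := fun (_ : X -> Prop) (x y : X) => A x /\ (x <> y -> / (INR k + 1) <= dist X x y)).
  destruct (zorn_pairwise X phi (fun _ => False)) as [N [HN [_ Hmax]]];
    [unfold phi; tauto| intros p q []|].
  exists N; split; [split|].
  - intros x Hx; apply (HN x x Hx Hx).
  - intros x y Hx Hy; apply (HN x y Hx Hy).
  - intros a Ha. apply NNPP; intro Hn.
    assert (Hfar : forall x, N x -> / (INR k + 1) <= dist X a x).
    { intros x Hx. apply Rnot_lt_le; intro; apply Hn; eauto. }
    assert (Na : N a).
    { apply (Hmax (fun x => N x \/ x = a)); [|intros x h; left; exact h|right; auto].
      intros x y [hx| ->] [hy| ->]; unfold phi.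
      - exact (HN x y hx hy).
      - split; [apply (HN x x hx hx)| intros _; rewrite dist_sym; auto].
      - split; [exact Ha| intros _; apply Hfar, hy].
      - split; [exact Ha| intros []; reflexivity]. }
    specialize (Hfar a Na); rewrite dist_self in Hfar.
    assert (H0 := inv_succ_pos k); lra.
Qed.

(* A separated set injects into any dense subset: distinct points of N have
   disjoint balls of radius 1/(3(k+1)). *)
Lemma separated_cle (k : nat) (N D : X -> Prop) :
  separated k N -> dense_in X D A -> cle N D.
Proof.
  intros [HNA HNsep] HD.
  assert (Hr : 0 < / (3 * (INR k + 1))).
  { apply Rinv_0_lt_compat; assert (0 <= INR k) by apply pos_INR; lra. }
  destruct (partial_choice vzero N (fun x d => D d /\ dist X x d < / (3 * (INR k + 1))))
    as [f Hf]; [intros x Hx; apply HD; auto|].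
  exists f; split; [intros x Hx; apply (Hf x Hx)|].
  intros x y Hx Hy E. apply NNPP; intro Hne.
  assert (Sep := HNsep x y Hx Hy Hne).
  destruct (Hf x Hx) as [_ D1], (Hf y Hy) as [_ D2].
  rewrite <- E, dist_sym in D2.
  assert (T := dist_tri X x (f x) y).
  assert (Ek : / (3 * (INR k + 1)) = / (INR k + 1) / 3)
    by (field; assert (0 <= INR k) by apply pos_INR; lra).
  assert (H0 := inv_succ_pos k). lra.
Qed.

Lemma in_list_closure (l : list X) (a : X) :
  (forall e, 0 < e -> exists y, In y l /\ dist X a y < e) -> In a l.
Proof.
  induction l as [|y l IH]; intro H.
  - destruct (H 1) as [y [[] _]]; lra.
  - destruct (classic (a = y)) as [->|Hne]; [left; auto|right].
    assert (Hd : 0 < dist X a y).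
    { destruct (vnorm_ge0 X (vadd a (vopp y))) as [h|h]; auto.
      exfalso; apply Hne, dist_eq0; auto. }
    apply IH. intros e He. destruct (H (Rmin e (dist X a y))) as [y' [[Eq|Hin] Hd']].
    + apply Rmin_pos; auto.
    + subst y'. assert (Rmin e (dist X a y) <= dist X a y) by apply Rmin_r. lra.
    + exists y'; split; auto. assert (Rmin e (dist X a y) <= e) by apply Rmin_l. lra.
Qed.

Lemma dense_infinite (D : X -> Prop) : dens_infinite X A -> dense_in X D A -> infin D.
Proof.
  intros HA HD l. apply NNPP; intro Hn.
  apply (HA A (fun x h => h)).
  - intros a Ha e He; exists a; split; auto; rewrite dist_self; auto.
  - exists l. intros a Ha. apply in_list_closure. intros e He.
    destruct (HD a Ha e He) as [d [Hd Hdd]]. exists d; split; auto.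
    apply NNPP; intro; apply Hn; eauto.
Qed.

Lemma dense_net : dens_infinite X A ->
  exists S0, incl_s S0 A /\ dense_in X S0 A /\ infin S0 /\
    forall D, dense_in X D A -> cle S0 D.
Proof.
  intro HA.
  destruct (choice (fun k N => separated k N /\
              forall a, A a -> exists x, N x /\ dist X a x < / (INR k + 1))) as [N HN].
  { exact maximal_separated. }
  set (S0 := fun x => exists k, N k x).
  assert (Hdense : dense_in X S0 A).
  { intros a Ha e He. destruct (inv_succ_small e He) as [k Hk].
    destruct (proj2 (HN k) a Ha) as [x [Hx Hd]]. exists x; split; [exists k; auto|lra]. }
  exists S0; split; [|split; [exact Hdense|split]].
  - intros x [k Hk]; apply (proj1 (proj1 (HN k))), Hk.
  - apply dense_infinite; auto.
  - intros D HD. apply cle_countable_union; [apply dense_infinite; auto|].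
    intro k; apply (separated_cle k); [apply HN| exact HD].
Qed.

End Nets.

Section Construction.
Variables (X : Banach) (G0 : (X -> X) -> Prop) (C : X -> Prop).

Definition unitv (p : X) : X := vscal (/ vnorm p) p.
Definition retract (r : X) : X := vscal (/ Rmax 1 (vnorm r)) r.

Lemma unitv_sphere (p : X) : p <> vzero -> sphere X (unitv p).
Proof.
  intro H. assert (H1 := norm_pos X p H). unfold sphere, unitv. rewrite vnorm_scal.
  rewrite Rabs_right; [field; lra|]. left; apply Rinv_0_lt_compat; auto.
Qed.

Lemma near_unit (y p : X) : sphere X y -> dist X y p < 1 ->
  p <> vzero /\ dist X y (unitv p) <= 2 * dist X y p.
Proof.
  unfold sphere; intros Hy Hd.
  assert (Hp : p <> vzero) by (intros ->; rewrite dist_0r in Hd; lra).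
  split; auto.
  assert (H1 := norm_pos X p Hp).
  assert (Eu : dist X p (unitv p) = Rabs (vnorm p - 1)).
  { unfold unitv. rewrite dist_sym, dist_scal_1.
    replace (/ vnorm p - 1) with (- ((vnorm p - 1) / vnorm p)) by (field; lra).
    rewrite Rabs_Ropp; unfold Rdiv; rewrite Rabs_mult, Rabs_inv, (Rabs_right (vnorm p)) by lra.
    field; lra. }
  assert (T := dist_tri X y p (unitv p)).
  assert (N1 := norm_dist X p y). assert (N2 := norm_dist X y p).
  rewrite dist_sym in N1.
  assert (Rabs (vnorm p - 1) <= dist X y p) by (apply Rabs_le; lra). lra.
Qed.

Lemma retract_ball (r : X) : ball1 X (retract r).
Proof.
  unfold ball1, retract. rewrite vnorm_scal.
  assert (H := Rmax_l 1 (vnorm r)). assert (H2 := Rmax_r 1 (vnorm r)).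
  rewrite Rabs_right by (left; apply Rinv_0_lt_compat; lra).
  apply (Rmult_le_reg_l (Rmax 1 (vnorm r))); [lra|].
  rewrite <- Rmult_assoc, Rinv_r by lra. lra.
Qed.

Lemma retract_dist (r z : X) : ball1 X z -> dist X (retract r) z <= 2 * dist X r z.
Proof.
  unfold ball1, retract, Rmax; intro Hz. destruct (Rle_dec 1 (vnorm r)) as [H|H].
  - assert (Hd := norm_dist X r z).
    assert (E : dist X (vscal (/ vnorm r) r) r = vnorm r - 1).
    { rewrite dist_scal_1.
      replace (/ vnorm r - 1) with (- ((vnorm r - 1) / vnorm r)) by (field; lra).
      rewrite Rabs_Ropp. unfold Rdiv; rewrite Rabs_mult, Rabs_inv by lra.
      rewrite (Rabs_right (vnorm r)) by lra. rewrite Rabs_right by lra. field; lra. }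
    assert (T := dist_tri X (vscal (/ vnorm r) r) r z). lra.
  - rewrite Rinv_1, vscal1. assert (0 <= dist X r z) by apply vnorm_ge0. lra.
Qed.

Definition combT (l : list (R * (X -> X))) (y : X) : X :=
  comb X (map (fun q => (fst q, snd q y)) l).

Definition convex_rot (l : list (R * (X -> X))) : Prop :=
  l <> nil /\ Forall (fun q => 0 <= fst q /\ G0 (snd q)) l /\
  fold_right Rplus 0 (map fst l) = 1.

(* A convex combination of rotations sending unitv p within 1/(k+1) of
   retract r (exists by convex transitivity), ... *)
Definition approx_comb (p r : X) (k : nat) : list (R * (X -> X)) :=
  epsilon (inhabits nil) (fun l => p <> vzero -> convex_rot l /\
    dist X (combT l (unitv p)) (retract r) < / (INR k + 1)).

(* ... a point of C within 1/(k+1) of unitv p (exists by density of C), ... *)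
Definition sphere_approx (p : X) (k : nat) : X :=
  epsilon (inhabits vzero) (fun c => p <> vzero -> C c /\ dist X (unitv p) c < / (INR k + 1)).

Definition rot_inv (T : X -> X) : X -> X :=
  epsilon (inhabits (fun x : X => x)) (fun S => G0 T ->
    G0 S /\ (forall x, S (T x) = x) /\ (forall x, T (S x) = x)).

Lemma orbit_lift (u : X) (l : list (R * X)) :
  Forall (fun q => 0 <= fst q /\ orbit X G0 u (snd q)) l ->
  exists l' : list (R * (X -> X)), map (fun q => (fst q, snd q u)) l' = l /\
     Forall (fun q => 0 <= fst q /\ G0 (snd q)) l'.
Proof.
  induction l as [|[a x] l IH]; intro H.
  - exists nil; auto.
  - inversion H; subst. destruct H2 as [Ha [T [HT HTx]]]. destruct (IH H3) as [l' [E F]].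
    exists ((a,T) :: l'); simpl; split.
    + rewrite E, HTx; auto.
    + constructor; auto.
Qed.

Lemma approx_comb_spec (p r : X) (k : nat) :
  convex_transitive X G0 -> p <> vzero ->
  convex_rot (approx_comb p r k) /\
  dist X (combT (approx_comb p r k) (unitv p)) (retract r) < / (INR k + 1).
Proof.
  intros Hct Hp. apply (epsilon_cond _ _ (fun l => convex_rot l /\
    dist X (combT l (unitv p)) (retract r) < / (INR k + 1))); [intros _|exact Hp].
  destruct (proj2 (Hct _ (unitv_sphere p Hp) (retract r)) (retract_ball r) (/ (INR k + 1)))
    as [v [[l [Hne [HF [Hs Hc]]]] Hd]]; [apply inv_succ_pos|].
  destruct (orbit_lift _ l HF) as [l' [E F]].
  exists l'; split; [split; [|split]|].
  - intros ->; apply Hne; rewrite <- E; reflexivity.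
  - exact F.
  - rewrite <- Hs, <- E, map_map; reflexivity.
  - unfold combT; rewrite E, Hc, dist_sym; exact Hd.
Qed.

Lemma sphere_approx_spec (p : X) (k : nat) :
  dense_in X C (sphere X) -> p <> vzero ->
  C (sphere_approx p k) /\ dist X (unitv p) (sphere_approx p k) < / (INR k + 1).
Proof.
  intros HC Hp. apply (epsilon_cond _ _ (fun c => C c /\ dist X (unitv p) c < / (INR k + 1)));
    [intros _|exact Hp].
  apply (HC (unitv p) (unitv_sphere p Hp) (/ (INR k + 1)) (inv_succ_pos k)).
Qed.

Lemma rot_inv_spec (T : X -> X) : rot_subgroup X G0 -> G0 T ->
  G0 (rot_inv T) /\ (forall x, rot_inv T (T x) = x) /\ (forall x, T (rot_inv T x) = x).
Proof.
  intros [_ [_ [_ Hinv]]] HT.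
  apply (epsilon_cond _ _ (fun S => G0 S /\ (forall x, S (T x) = x) /\
    (forall x, T (S x) = x))); [intros _; apply Hinv| exact HT]; exact HT.
Qed.

Lemma combT_dist (l : list (R * (X -> X))) (y u : X) :
  (forall T, G0 T -> rotation X T) ->
  Forall (fun q => 0 <= fst q /\ G0 (snd q)) l ->
  dist X (combT l y) (combT l u) <= fold_right Rplus 0 (map fst l) * dist X y u.
Proof.
  intros Hrot; induction l as [|[a T] l IH]; intro H; unfold combT in *; simpl.
  - rewrite dist_self; lra.
  - inversion H; subst. simpl in H2. destruct H2 as [Ha HT].
    assert (D := dist_add X (vscal a (T y)) (comb X (map (fun q => (fst q, snd q y)) l))
                   (vscal a (T u)) (comb X (map (fun q => (fst q, snd q u)) l))).
    rewrite dist_scal, rot_dist, Rabs_right in D by (auto; lra).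
    assert (I := IH H3). lra.
Qed.

Inductive opcode : Type :=
| OpAdd
| OpScale (i j k : nat)
| OpRot (i j : nat)
| OpRotInv (i j : nat)
| OpSphere (k : nat).

Definition opcode_enc (o : opcode) : nat :=
  match o with
  | OpAdd => Cantor.to_nat (0, 0)
  | OpScale i j k => Cantor.to_nat (1, Cantor.to_nat (i, Cantor.to_nat (j, k)))
  | OpRot i j => Cantor.to_nat (2, Cantor.to_nat (i, j))
  | OpRotInv i j => Cantor.to_nat (3, Cantor.to_nat (i, j))
  | OpSphere k => Cantor.to_nat (4, k)
  end%nat.

Lemma opcode_enc_inj (o o' : opcode) : opcode_enc o = opcode_enc o' -> o = o'.
Proof.
  assert (Hinj : forall p q, Cantor.to_nat p = Cantor.to_nat q -> p = q).
  { intros p q E; rewrite <- (Cantor.cancel_of_to p), E; apply Cantor.cancel_of_to. }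
  destruct o, o'; unfold opcode_enc; intro E;
    repeat match goal with
    | H : Cantor.to_nat _ = Cantor.to_nat _ |- _ => apply Hinj, pair_equal_spec in H as [? ?]
    end; subst; first [reflexivity | congruence].
Qed.

Definition rot_of (b c : X) (j i : nat) : X -> X :=
  nth i (map snd (approx_comb b c j)) (fun x => x).

Definition ops (o : opcode) (a b c : X) : X :=
  match o with
  | OpAdd => vadd a b
  | OpScale i j k => vscal ((INR i - INR j) / (INR k + 1)) a
  | OpRot i j => rot_of b c j i a
  | OpRotInv i j => rot_inv (rot_of b c j i) a
  | OpSphere k => sphere_approx a k
  end.

Variable S0 : X -> Prop.

Definition W : X -> Prop := generated X opcode ops S0.
Definition Y : X -> Prop := closure X W.

Lemma W_add (a b : X) : W a -> W b -> W (vadd a b).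
Proof. intros Ha Hb; apply (generated_op _ _ ops S0 OpAdd a b a); auto. Qed.

Lemma W_scal i j k (a : X) : W a -> W (vscal ((INR i - INR j) / (INR k + 1)) a).
Proof. intros Ha; apply (generated_op _ _ ops S0 (OpScale i j k) a a a); auto. Qed.

Lemma W_sphere_approx k (a : X) : W a -> W (sphere_approx a k).
Proof. intros Ha; apply (generated_op _ _ ops S0 (OpSphere k) a a a); auto. Qed.

Lemma W_rot (b c : X) j a T x : W b -> W c -> In (a, T) (approx_comb b c j) -> W x ->
  W (T x) /\ W (rot_inv T x).
Proof.
  intros Hb Hc Hin Hx.
  assert (Hin2 : In T (map snd (approx_comb b c j))) by
    (change T with (snd (a, T)); apply in_map, Hin).
  destruct (In_nth _ _ (fun x : X => x) Hin2) as [i [_ Hi]].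
  split.
  - assert (H := generated_op _ _ ops S0 (OpRot i j) x b c Hx Hb Hc).
    simpl in H; unfold rot_of in H; rewrite Hi in H; exact H.
  - assert (H := generated_op _ _ ops S0 (OpRotInv i j) x b c Hx Hb Hc).
    simpl in H; unfold rot_of in H; rewrite Hi in H; exact H.
Qed.

Lemma Y_subspace (s : X) : S0 s -> closed_subspace X Y.
Proof.
  intro Hs. apply closure_subspace; [|exact W_add| exact W_scal].
  assert (H := W_scal 0 0 0 s (generated_base _ _ ops S0 s Hs)).
  replace ((INR 0 - INR 0) / (INR 0 + 1)) with 0 in H by (simpl; field).
  rewrite vscal0 in H; exact H.
Qed.

Hypotheses (Hrot : rot_subgroup X G0) (Hct : convex_transitive X G0).

Lemma rot_restr (b c : X) j a T : b <> vzero -> W b -> W c ->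
  In (a, T) (approx_comb b c j) -> restr_group X G0 Y T.
Proof.
  intros Hb0 Hb Hc Hin.
  assert (HG : G0 T).
  { destruct (approx_comb_spec b c j Hct Hb0) as [[_ [HF _]] _].
    rewrite Forall_forall in HF; apply (HF _ Hin). }
  destruct (rot_inv_spec T Hrot HG) as [HGi [_ Hi2]].
  assert (Hr1 := proj1 Hrot T HG). assert (Hr2 := proj1 Hrot _ HGi).
  split; [exact HG| split].
  - intros y Hy e He. destruct (Hy e He) as [w [Hw Hd]].
    exists (T w); split; [apply (W_rot b c j a); auto| rewrite rot_dist; auto].
  - intros y Hy. exists (rot_inv T y); split; [|apply Hi2].
    intros e He. destruct (Hy e He) as [w [Hw Hd]].
    exists (rot_inv T w); split; [apply (W_rot b c j a); auto| rewrite rot_dist; auto].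
Qed.

Lemma combT_conv (G : (X -> X) -> Prop) (l : list (R * (X -> X))) (y : X) :
  convex_rot l -> (forall q, In q l -> G (snd q)) -> conv X (orbit X G y) (combT l y).
Proof.
  intros [Hne [HF Hs]] HG.
  exists (map (fun q => (fst q, snd q y)) l); split; [|split; [|split]].
  - destruct l; [contradiction| discriminate].
  - rewrite Forall_forall in *; intros q Hq; apply in_map_iff in Hq.
    destruct Hq as [[a T] [<- Hin]]; simpl.
    split; [apply (HF _ Hin)| exists T; split; [apply (HG _ Hin)| reflexivity]].
  - rewrite map_map; exact Hs.
  - reflexivity.
Qed.

(* Every point z of the unit ball of Y is approximated by convex combinations
   of G0_Y-images of a unit vector y of Y: approximate y and z by p and r in W;
   the combination chosen for (p, r) sends y close to retract r, hence to z. *)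
Lemma Y_conv_approx (y z : X) : Y y -> sphere X y -> Y z -> ball1 X z ->
  closure X (conv X (orbit X (restr_group X G0 Y) y)) z.
Proof.
  intros Hy Hsy Hz Hb e He.
  set (d := Rmin (e / 8) (1/2)).
  assert (Hd0 : 0 < d) by (unfold d; apply Rmin_pos; lra).
  assert (Hd1 : d <= e / 8) by apply Rmin_l. assert (Hd2 : d <= 1/2) by apply Rmin_r.
  destruct (Hy d Hd0) as [p [Hp Hdp]]. destruct (Hz d Hd0) as [r [Hr Hdr]].
  destruct (inv_succ_small (e/2)) as [k Hk]; [lra|].
  destruct (near_unit y p Hsy) as [Hp0 Hu]; [lra|].
  destruct (approx_comb_spec p r k Hct Hp0) as [Hl Hc].
  set (l := approx_comb p r k) in *.
  exists (combT l y); split.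
  - apply combT_conv; [exact Hl|].
    intros [a T] Hin; apply (rot_restr p r k a T); auto.
  - assert (D1 := combT_dist l y (unitv p) (proj1 Hrot) (proj1 (proj2 Hl))).
    rewrite (proj2 (proj2 Hl)), Rmult_1_l in D1.
    assert (D2 := retract_dist r z Hb).
    assert (T1 := dist_tri X z (retract r) (combT l y)).
    assert (T2 := dist_tri X (retract r) (combT l (unitv p)) (combT l y)).
    assert (E1 := dist_sym X z (retract r)). assert (E2 := dist_sym X r z).
    assert (E3 := dist_sym X (combT l (unitv p)) (combT l y)).
    assert (E4 := dist_sym X (combT l (unitv p)) (retract r)).
    lra.
Qed.

(* Y is convex-transitive for G0_Y: closed convex hulls of G0_Y-orbits of unit
   vectors stay in the ball (they consist of rotations) and fill it. *)
Lemma Y_convex_transitive : convex_transitive_sub X G0 Y.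
Proof.
  intros y Hy Hsy z; split; intros [Hz H]; split; auto.
  - apply (closed_conv_orbit_ball X (restr_group X G0 Y) y); auto.
    intros T [HT _]; apply (proj1 Hrot T HT).
  - apply Y_conv_approx; auto.
Qed.

Lemma Y_sphere_dense : (forall x, C x -> sphere X x) -> dense_in X C (sphere X) ->
  dense_in X (fun x => C x /\ Y x /\ sphere X x) (fun y => Y y /\ sphere X y).
Proof.
  intros HCs HC y [Hy Hsy] e He.
  set (d := Rmin (e / 4) (1/2)).
  assert (Hd0 : 0 < d) by (unfold d; apply Rmin_pos; lra).
  assert (Hd1 : d <= e / 4) by apply Rmin_l. assert (Hd2 : d <= 1/2) by apply Rmin_r.
  destruct (Hy d Hd0) as [p [Hp Hdp]].
  destruct (inv_succ_small (e/2)) as [k Hk]; [lra|].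
  destruct (near_unit y p Hsy) as [Hp0 Hu]; [lra|].
  destruct (sphere_approx_spec p k HC Hp0) as [Hc Hdc].
  exists (sphere_approx p k); split; [split; [|split]|].
  - exact Hc.
  - apply closure_incl, W_sphere_approx, Hp.
  - apply HCs, Hc.
  - assert (T := dist_tri X y (unitv p) (sphere_approx p k)). lra.
Qed.

End Construction.

Theorem theorem2p4 (X : Banach) (G0 : (X -> X) -> Prop)
  (C : X -> Prop) (A : X -> Prop) :
  rot_subgroup X G0 ->
  convex_transitive X G0 ->
  (forall x, C x -> sphere X x) ->
  dense_in X C (sphere X) ->
  closed_subspace X A ->
  dens_infinite X A ->
  exists Y : X -> Prop,
    closed_subspace X Y /\
    (forall x, A x -> Y x) /\
    dens_eq X Y A /\
    convex_transitive_sub X G0 Y /\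
    dense_in X (fun x => C x /\ Y x /\ sphere X x) (fun y => Y y /\ sphere X y).
Proof.
  intros Hrot Hct HCs HCd _ HAinf.
  destruct (dense_net X A HAinf) as [S0 [HS0A [HS0d [HS0i HS0min]]]].
  destruct (HS0i nil) as [s0 [Hs0 _]].
  assert (HW : cle (W X G0 C S0) S0)
    by exact (generated_card X opcode (ops X G0 C) S0 opcode_enc opcode_enc_inj HS0i).
  assert (HAY : forall x, A x -> Y X G0 C S0 x).
  { intros a Ha e He. destruct (HS0d a Ha e He) as [s [Hs Hd]].
    exists s; split; [apply generated_base, Hs| exact Hd]. }
  exists (Y X G0 C S0); split; [|split; [exact HAY|split; [split|split]]].
  - exact (Y_subspace X G0 C S0 s0 Hs0).
  - (* dens(Y) <= dens(A): W is dense in Y and |W| = |S0| <= |D| *)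
    intros D _ HD; exists (W X G0 C S0); split; [|split].
    + intros x Hx; apply closure_incl, Hx.
    + intros y Hy; exact Hy.
    + exact (cle_trans X _ _ _ HW (HS0min D HD)).
  - (* dens(A) <= dens(Y): a set dense in Y is dense in A *)
    intros D _ HD; exists S0; split; [exact HS0A| split; [exact HS0d|]].
    apply HS0min; intros a Ha; apply HD, HAY, Ha.
  - exact (Y_convex_transitive X G0 C S0 Hrot Hct).
  - exact (Y_sphere_dense X G0 C S0 HCs HCd).
Qed.
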